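(* (i) For all $y\in\mathbb{Z}_p$, $S^y\circ\sigma=\sigma\circ S^y+y\,S^{y-1}$ as maps on $C(\mathbb{Z}_p,\mathbb{C}_p)$. (ii) For $\phi\in C(\mathbb{Z}_p,\mathbb{C}_p)$ and $x,y\in\mathbb{Z}_p$, $$T^x(\sigma(\phi))(y)=T^{x+1}(\phi)(y)+y\,T^x(\phi)(y-1),$$ equivalently $\big((\mathbf 1-\mathbf x)^{\star y}\star\sigma(\phi)\big)(x)=\big((\mathbf 1-\mathbf x)^{\star y}\star\phi\big)(x+1)+y\big((\mathbf 1-\mathbf x)^{\star(y-1)}\star\phi\big)(x)$. (iii) If $\psi\in\mathcal{A}$, $\phi\in C(\mathbb{Z}_p,\mathbb{C}_p)$ and $x\in\mathbb{Z}_p$, then $$\big(\psi\star\sigma(\phi)\big)(x)=(\psi\star\phi)(x+1)-\big(D(\psi)\star\phi\big)(x).$$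
   Context: Fix a prime $p$. $\mathbb{C}_p$ denotes the completion of an algebraic closure of $\mathbb{Q}_p$, with absolute value $|\cdot|$ normalized by $|p|=1/p$. $C(\mathbb{Z}_p,\mathbb{C}_p)$ is the $\mathbb{C}_p$-Banach space of continuous functions $\mathbb{Z}_p\to\mathbb{C}_p$ with the sup-norm $\|\cdot\|$. For $n\in\mathbb{Z}_{\ge0}$ and $x\in\mathbb{Z}_p$, $\binom{x}{n}=x(x-1)\cdots(x-n+1)/n!$. For $\phi$ let $(\nabla\phi)(x)=\phi(x+1)-\phi(x)$ and $\sigma(\phi)(x)=\phi(x+1)$; every $\phi$ has Mahler expansion $\phi(x)=\sum_{n\ge0}(\nabla^n\phi)(0)\binom xn$. The convolution $\phi\star\psi$ is the continuous function with Mahler coefficients $(\nabla^n(\phi\star\psi))(0)=\sum_{k=0}^n\binom nk(\nabla^k\phi)(0)(\nabla^{n-k}\psi)(0)$. For $y\in\mathbb{Z}_p$, $S^y(\phi)(x)=\sum_{k\ge0}(-1)^k k!\binom yk\binom xk\phi(x-k)$; for $x\in\mathbb{Z}_p$, $T^x(\phi)(y)=S^y(\phi)(x)$. $\mathbf 1$ is the constant function $1$, $\mathbf x$ is $x\mapsto x$, $(\mathbf 1-\mathbf x)^{\star y}:=S^y(\mathbf 1)$ for $y\in\mathbb{Z}_p$, and $(\mathbf x-\mathbf 1)^{\star n}:=(-1)^nS^n(\mathbf 1)$ for $n\in\mathbb{Z}$. $\mathcal{A}$ is the set of functions $\sum_{n=-\infty}^N a_n(\mathbf x-\mathbf 1)^{\star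 n}$ with $N\in\mathbb{Z}$, $a_n\in\mathbb{C}_p$, $a_n\to0$ as $n\to-\infty$; the coefficients $a_n$ are uniquely determined by the function, and $D:\mathcal{A}\to\mathcal{A}$ is the linear operator $D\big(\sum_{n\le N}a_n(\mathbf x-\mathbf 1)^{\star n}\big)=\sum_{n\le N}na_n(\mathbf x-\mathbf 1)^{\star(n-1)}$. *)

From HB Require Import structures.
From mathcomp Require Import all_boot all_order all_algebra.
From mathcomp Require Import reals.
From Stdlib Require Import ClassicalEpsilon.
Set Implicit Arguments. Unset Strict Implicit. Unset Printing Implicit Defensive.
Import Order.TTheory GRing.Theory Num.Theory.
Local Open Scope ring_scope.

(* We describe it axiomatically, up to
   isometric isomorphism: a field K with an absolute value |.| : K -> R which is
   ultrametric, complete, algebraically closed, satisfies |p| = 1/p, and in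
   which the elements algebraic over Q_p (= closure of Q in K) are dense.
   These properties characterise C_p (completion of an algebraic closure of Q_p). *)

Section Cp.
Variables (R : realType) (K : fieldType) (abs : K -> R).

(* closure of Q in K : this is Q_p *)
Definition in_Qp (x : K) : Prop :=
  forall e : R, 0 < e -> exists r : rat, abs (x - ratr r) < e.

(* closure of N in K : this is Z_p *)
Definition in_Zp (x : K) : Prop :=
  forall e : R, 0 < e -> exists n : nat, abs (x - n%:R) < e.

Definition algebraic_over_Qp (z : K) : Prop :=
  exists q : {poly K}, [/\ q != 0, (forall i, in_Qp q`_i) & root q z].

Definition cauchy_seq (u : nat -> K) : Prop :=
  forall e : R, 0 < e -> exists N : nat,
    forall m n, (N <= m)%N -> (N <= n)%N -> abs (u m - u n) < e.

Definition seq_cvg_to (u : nat -> K) (l : K) : Prop :=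
  forall e : R, 0 < e -> exists N : nat, forall n, (N <= n)%N -> abs (u n - l) < e.

Record is_Cp (p : nat) : Prop := {
  abs_ge0 : forall x, 0 <= abs x;
  abs_eq0 : forall x, abs x = 0 <-> x = 0;
  absM : forall x y, abs (x * y) = abs x * abs y;
  abs_ultra : forall x y, abs (x + y) <= Num.max (abs x) (abs y);
  abs_p : abs (p%:R) = (p%:R)^-1;
  complete : forall u, cauchy_seq u -> exists l, seq_cvg_to u l;
  alg_closed : GRing.closed_field_axiom K;
  algQp_dense : forall x (e : R), 0 < e ->
    exists z, algebraic_over_Qp z /\ abs (x - z) < e
}.

(* sum of a convergent series (value 0 if it does not converge) *)
Definition has_sum (a : nat -> K) (s : K) : Prop :=
  seq_cvg_to (fun n => \sum_(k < n) a k) s.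

Definition sumK (a : nat -> K) : K := epsilon (inhabits 0) (has_sum a).

(* continuity on Z_p ; functions are represented as maps K -> K, only their
   values on Z_p matter *)
Definition cont_Zp (phi : K -> K) : Prop :=
  forall x, in_Zp x -> forall e : R, 0 < e -> exists2 d : R, 0 < d &
    forall z, in_Zp z -> abs (z - x) < d -> abs (phi z - phi x) < e.

Definition binom (x : K) (n : nat) : K :=
  (\prod_(i < n) (x - i%:R)) / (n`!)%:R.

Definition nabla (phi : K -> K) : K -> K := fun x => phi (x + 1) - phi x.
Definition sigma (phi : K -> K) : K -> K := fun x => phi (x + 1).

Definition mahler_fun (c : nat -> K) : K -> K :=
  fun x => sumK (fun n => c n * binom x n).

Definition conv (phi psi : K -> K) : K -> K :=
  mahler_fun (fun n => \sum_(k < n.+1)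
     'C(n, k)%:R * iter k nabla phi 0 * iter (n - k) nabla psi 0).

Definition Sop (y : K) (phi : K -> K) : K -> K :=
  fun x => sumK (fun k => (-1) ^+ k * (k`!)%:R * binom y k * binom x k
                          * phi (x - k%:R)).

Definition Top (x : K) (phi : K -> K) : K -> K := fun y => Sop y phi x.

Definition one_fun : K -> K := fun _ => 1.

Definition omx_pow (y : K) : K -> K := Sop y one_fun.

Definition xm1_pow (n : int) : K -> K :=
  fun x => (-1) ^ n * Sop (n%:~R) one_fun x.

(* the element sum_{n <= N} a_n (x - 1)^{*n} of A *)
Definition Afun (a : int -> K) (N : int) : K -> K :=
  fun x => sumK (fun m : nat => a (N - m%:Z) * xm1_pow (N - m%:Z) x).

Definition decays_at_minfty (a : int -> K) : Prop :=
  forall e : R, 0 < e -> exists M : int, forall n, n <= M -> abs (a n) < e.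

(* coefficients of D(psi): D(sum_{n<=N} a_n X^n) = sum_{m<=N-1} (m+1) a_{m+1} X^m *)
Definition Dcoef (a : int -> K) : int -> K := fun m => (m + 1)%:~R * a (m + 1).

End Cp.

From HB Require Import structures.
From mathcomp Require Import all_boot all_order all_algebra.
From mathcomp Require Import reals.
From mathcomp Require Import ring lra zify.
From Stdlib Require Import ClassicalEpsilon Classical.
From mathcomp Require boolp.
Import Order.TTheory GRing.Theory Num.Theory.
Set Implicit Arguments. Unset Strict Implicit. Unset Printing Implicit Defensive.
Local Open Scope ring_scope.

(* Every identity is a termwise identity between convergent series.
   For (i), Pascal's rule [binom (x + 1) k.+1 = binom x k.+1 + binom x k] and
   absorption [k.+1 * binom y k.+1 = y * binom (y - 1) k] split the series of
   S^y(phi)(x + 1) into those of S^y(sigma phi)(x) and -y S^(y-1)(phi)(x).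
   For the convolutions, Pascal's rule shows that if the Mahler coefficients
   of psi and chi satisfy a_(k+1) = lam c_k, then
   psi ⋆ sigma phi = (psi ⋆ phi)(. + 1) - lam (chi ⋆ phi); this applies to
   psi = (1 - x)^{⋆y}, with lam = -y and chi = (1 - x)^{⋆(y-1)}, and to psi
   in A, with lam = 1 and chi = D psi.
   Convergence rests on |k!| -> 0, on |binom x k| <= 1 for x in Z_p, and on
   Mahler's theorem that the Mahler coefficients of a continuous function tend
   to 0.  The latter follows from uniform continuity on N (a Koenig-type
   compactness argument for Z_p) and the congruence
   nabla^(p^s) g(x) = g(x + p^s) - g(x) modulo p. *)

Section Cp_analysis.
Variables (p : nat) (R : realType) (K : fieldType) (abs : K -> R).
Hypothesis hp : prime p.
Hypothesis hC : is_Cp abs p.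
Implicit Types (x y z : K).

Lemma abs_nneg x : 0 <= abs x. Proof. exact: (abs_ge0 hC x). Qed.

Lemma abs0 : abs 0 = 0. Proof. by apply/(abs_eq0 hC). Qed.

Lemma abs_gt0 x : x != 0 -> 0 < abs x.
Proof.
move=> hx; rewrite lt_neqAle abs_nneg andbT eq_sym.
by apply: contra hx => /eqP/(abs_eq0 hC) ->.
Qed.

Lemma abs1 : abs 1 = 1.
Proof.
have h := absM hC 1 1; rewrite mulr1 in h.
have h1 : abs 1 != 0 by rewrite gt_eqF // abs_gt0 // oner_eq0.
by apply/(mulIf h1); rewrite mul1r -h.
Qed.

Lemma absN1 : abs (-1) = 1.
Proof.
have h := absM hC (-1) (-1); rewrite mulrNN mulr1 abs1 in h.
have h0 := abs_nneg (-1); nra.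
Qed.

Lemma absN x : abs (- x) = abs x.
Proof. by rewrite -mulN1r (absM hC) absN1 mul1r. Qed.

Lemma abs_distC x y : abs (x - y) = abs (y - x).
Proof. by rewrite -absN opprB. Qed.

Lemma absV x : abs x^-1 = (abs x)^-1.
Proof.
have [->|hx] := eqVneq x 0; first by rewrite invr0 abs0 invr0.
have h := absM hC x x^-1; rewrite mulfV // abs1 in h.
have hx' : abs x != 0 by rewrite gt_eqF // abs_gt0.
by apply/(mulfI hx'); rewrite -h mulfV.
Qed.

Lemma absX x n : abs (x ^+ n) = abs x ^+ n.
Proof. by elim: n => [|n IH]; rewrite ?expr0 ?abs1 // !exprS (absM hC) IH. Qed.

Lemma abs_sign k : abs ((-1) ^+ k) = 1.
Proof. by rewrite absX absN1 expr1n. Qed.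

Lemma abs_signz (n : int) : abs ((-1) ^ n) = 1.
Proof.
case: n => m; first by rewrite -exprnP abs_sign.
by rewrite NegzE -exprnN absV abs_sign invr1.
Qed.

Lemma ultra_le x y B : abs x <= B -> abs y <= B -> abs (x + y) <= B.
Proof. by move=> hx hy; apply: le_trans (abs_ultra hC x y) _; rewrite ge_max hx hy. Qed.

Lemma ultraB_le x y B : abs x <= B -> abs y <= B -> abs (x - y) <= B.
Proof. by move=> hx hy; apply: ultra_le => //; rewrite absN. Qed.

Lemma ultra_lt x y B : abs x < B -> abs y < B -> abs (x + y) < B.
Proof. by move=> hx hy; apply: le_lt_trans (abs_ultra hC x y) _; rewrite gt_max hx hy. Qed.

Lemma ultraB_lt x y B : abs x < B -> abs y < B -> abs (x - y) < B.
Proof. by move=> hx hy; apply: ultra_lt => //; rewrite absN. Qed.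

Lemma ultra_sum_le (I : Type) (r : seq I) (P : pred I) (F : I -> K) B :
  0 <= B -> (forall i, P i -> abs (F i) <= B) -> abs (\sum_(i <- r | P i) F i) <= B.
Proof.
move=> hB hF; apply: (big_ind (fun x => abs x <= B)) => //; first by rewrite abs0.
by move=> x y; apply: ultra_le.
Qed.

Lemma ultra_sum_lt (I : Type) (r : seq I) (P : pred I) (F : I -> K) B :
  0 < B -> (forall i, P i -> abs (F i) < B) -> abs (\sum_(i <- r | P i) F i) < B.
Proof.
move=> hB hF; apply: (big_ind (fun x => abs x < B)) => //; first by rewrite abs0.
by move=> x y; apply: ultra_lt.
Qed.

Lemma abs_prod_le1 k (F : 'I_k -> K) : (forall i, abs (F i) <= 1) -> abs (\prod_i F i) <= 1.
Proof.
move=> hF; apply: (big_ind (fun x => abs x <= 1)) => [|x y hx hy|i _]; first by rewrite abs1.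
  by rewrite (absM hC); apply: le_trans (ler_wpM2l (abs_nneg x) hy) _; rewrite mulr1.
exact: hF.
Qed.

Lemma abs_prodB_le k (F G : nat -> K) B : 0 <= B ->
  (forall i, abs (F i) <= 1) -> (forall i, abs (G i) <= 1) ->
  (forall i, abs (F i - G i) <= B) ->
  abs (\prod_(i < k) F i - \prod_(i < k) G i) <= B.
Proof.
move=> hB hF hG hFG; elim: k => [|k IH]; first by rewrite !big_ord0 subrr abs0.
rewrite !big_ord_recr /=.
have -> : \prod_(i < k) F i * F k - \prod_(i < k) G i * G k
   = \prod_(i < k) F i * (F k - G k) + (\prod_(i < k) F i - \prod_(i < k) G i) * G k.
  by rewrite mulrBr mulrBl addrA subrK.
apply: ultra_le; rewrite (absM hC).
  have h1 : abs (\prod_(i < k) F i) <= 1 by apply: abs_prod_le1.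
  by apply: le_trans (ler_wpM2r (abs_nneg _) h1) _; rewrite mul1r.
by apply: le_trans (ler_wpM2l (abs_nneg _) (hG k)) _; rewrite mulr1.
Qed.

Lemma abs_natr_le1 n : abs (n%:R) <= 1.
Proof.
elim: n => [|n IH]; first by rewrite abs0 ler01.
by rewrite mulrSr; apply: ultra_le => //; rewrite abs1.
Qed.

Lemma abs_intr_le1 (z : int) : abs (z%:~R) <= 1.
Proof. by case: z => n; rewrite ?NegzE ?mulrNz ?absN abs_natr_le1. Qed.

Lemma abs_natr_mul_le n x : abs (n%:R * x) <= abs x.
Proof.
rewrite (absM hC); apply: le_trans (ler_wpM2r (abs_nneg _) (abs_natr_le1 n)) _.
by rewrite mul1r.
Qed.

Lemma p_gt1 : (1 < p)%N. Proof. exact: prime_gt1. Qed.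

Lemma p_gt0 : (0 < p)%N. Proof. exact: ltn_trans p_gt1. Qed.

Lemma abs_p_lt1 : abs (p%:R) < 1.
Proof. by rewrite (abs_p hC) invf_lt1 ?ltr1n ?p_gt1 // ltr0n p_gt0. Qed.

Lemma abs_p_gt0 : 0 < abs (p%:R).
Proof. by rewrite (abs_p hC) invr_gt0 ltr0n p_gt0. Qed.

Lemma abs_p_expr_mono m n : (m <= n)%N -> abs (p%:R) ^+ n <= abs (p%:R) ^+ m.
Proof. by move=> h; apply: ler_wiXn2l => //; [apply: abs_nneg | apply: ltW; apply: abs_p_lt1]. Qed.

Lemma abs_p_expr_small e : 0 < e -> exists t, abs (p%:R) ^+ t < e.
Proof.
move=> he; set t := Num.Def.archi_bound e^-1.
have ht : e^-1 < t%:R by apply: archi_boundP; rewrite invr_ge0 ltW.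
exists t; rewrite (abs_p hC) exprVn -natrX.
have hpt : t%:R < (p ^ t)%:R :> R by rewrite ltr_nat ltn_expl // p_gt1.
have h0 : 0 < (p ^ t)%:R :> R by rewrite ltr0n expn_gt0 p_gt0.
by rewrite invf_plt ?posrE //; apply: lt_trans hpt.
Qed.

Lemma abs_natr_mulpX_le c t : abs ((c * p ^ t)%:R) <= abs (p%:R) ^+ t.
Proof. by rewrite natrM natrX -absX abs_natr_mul_le. Qed.

(* [p%:R != 0] as [|p| = 1/p]; when p does not divide n, a Bezout relation
   [a n = b p + 1] would give [-1 = b p] with [|b p| < 1]. *)
Lemma natr_neq0 n : (0 < n)%N -> n%:R != 0 :> K.
Proof.
elim/ltn_ind: n => n IH hn.
have [hd|hnd] := boolP (p %| n)%N.
  have [m hm] := dvdnP hd.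
  have hm0 : (0 < m)%N by move: hn; rewrite hm muln_gt0 => /andP[].
  have hlt : (m < n)%N by rewrite hm -{1}[m]muln1 ltn_mul2l hm0 p_gt1.
  rewrite hm natrM mulf_neq0 //; first exact: IH.
  by apply/eqP => h0; have := abs_p_gt0; rewrite h0 abs0 ltxx.
have hco : gcdn n p = 1%N by apply/eqP; rewrite gcdnC -/(coprime p n) prime_coprime.
case: (egcdnP p hn) => km kn hk _; rewrite hco in hk.
apply/negP => /eqP h0.
have : (km * n)%:R = (kn * p + 1)%:R :> K by rewrite hk.
rewrite natrM h0 mulr0 natrD natrM => /eqP; rewrite eq_sym addr_eq0 => /eqP h1.
have : abs (kn%:R * p%:R) < 1 by apply: le_lt_trans (abs_natr_mul_le _ _) abs_p_lt1.
by rewrite h1 absN abs1 ltxx.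
Qed.

Lemma fact_natr_neq0 k : (k`!)%:R != 0 :> K.
Proof. by rewrite natr_neq0 // fact_gt0. Qed.

Lemma abs_fact_mono m n : (m <= n)%N -> abs ((n`!)%:R) <= abs ((m`!)%:R).
Proof.
move=> /subnK <-; elim: (n - m)%N => [|d IH]; first by rewrite add0n.
by rewrite addSn factS natrM; apply: le_trans IH; apply: abs_natr_mul_le.
Qed.

Lemma abs_fact_mulp m : abs (((m * p)`!)%:R) <= abs (p%:R) ^+ m.
Proof.
elim: m => [|m IH]; first by rewrite mul0n fact0 abs1 expr0.
have -> : (m.+1 * p = (m * p + p.-1).+1)%N by rewrite mulSn; have := p_gt0; lia.
rewrite factS -addnS prednK ?p_gt0 // natrM (absM hC) exprS.
have h1 : abs ((m * p + p)%:R) <= abs (p%:R) by rewrite -mulSnr natrM abs_natr_mul_le.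
have h2 : abs (((m * p + p.-1)`!)%:R) <= abs (p%:R) ^+ m.
  by apply: le_trans IH; apply: abs_fact_mono; apply: leq_addr.
apply: le_trans (ler_wpM2r (abs_nneg _) h1) _.
by apply: ler_wpM2l; [apply: abs_nneg | ].
Qed.

Definition null_seq (u : nat -> K) :=
  forall e : R, 0 < e -> exists N, forall n, (N <= n)%N -> abs (u n) < e.

Lemma null_seq_fact : null_seq (fun k => (k`!)%:R).
Proof.
move=> e he; have [t ht] := abs_p_expr_small he; exists (t * p)%N => n hn.
by apply: le_lt_trans (abs_fact_mono hn) _; apply: le_lt_trans (abs_fact_mulp t) _.
Qed.

Lemma null_seq_le u v : null_seq u -> (forall n, abs (v n) <= abs (u n)) -> null_seq v.
Proof.
move=> hu hvu e he; have [N hN] := hu e he; exists N => n hn.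
exact: le_lt_trans (hvu n) (hN n hn).
Qed.

Lemma null_seq_bounded u : null_seq u -> exists2 M, 0 < M & forall n, abs (u n) <= M.
Proof.
move=> hu; have [N hN] := hu 1 ltr01.
have hS : 0 <= \sum_(k < N) abs (u k) by rewrite sumr_ge0 // => i _; apply: abs_nneg.
exists (1 + \sum_(k < N) abs (u k)); first by apply: lt_le_trans ltr01 _; rewrite lerDl.
move=> n; have [hn|hn] := leqP N n.
  by apply: le_trans (ltW (hN n hn)) _; rewrite lerDl.
apply: le_trans (_ : _ <= \sum_(k < N) abs (u k)) _; last by rewrite lerDr.
by rewrite (bigD1 (Ordinal hn)) //= lerDl sumr_ge0 // => i _; apply: abs_nneg.
Qed.

Lemma null_seq_mulr_bounded u v B : null_seq u -> (forall n, abs (v n) <= B) ->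
  null_seq (fun n => u n * v n).
Proof.
move=> hu hv e he.
have hB : 0 < B + 1 by apply: lt_le_trans ltr01 _; rewrite lerDr (le_trans (abs_nneg _) (hv 0%N)).
have [N hN] := hu (e / (B + 1)) (divr_gt0 he hB); exists N => n hn.
have h1 := hN n hn; rewrite ltr_pdivlMr // in h1.
rewrite (absM hC); apply: le_lt_trans (ler_wpM2l (abs_nneg _) (hv n)) _.
apply: le_lt_trans _ h1; apply: ler_wpM2l; [exact: abs_nneg | lra].
Qed.

Lemma has_sum_unique a s t : has_sum abs a s -> has_sum abs a t -> s = t.
Proof.
move=> hs ht; apply/eqP; rewrite -subr_eq0; apply/eqP/(abs_eq0 hC).
apply/eqP; rewrite eq_le abs_nneg andbT leNgt; apply/negP => he.
have [N1 h1] := hs _ he; have [N2 h2] := ht _ he.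
have := ultraB_lt (h2 (N1 + N2)%N (leq_addl _ _)) (h1 (N1 + N2)%N (leq_addr _ _)).
by rewrite opprB addrC addrA subrK ltxx.
Qed.

Lemma sumK_eq a s : has_sum abs a s -> sumK abs a = s.
Proof.
move=> hs; apply: (has_sum_unique _ hs).
by apply: (epsilon_spec (inhabits 0) (has_sum abs a)); exists s.
Qed.

Lemma eq_has_sum a b s : (forall n, a n = b n) -> has_sum abs a s -> has_sum abs b s.
Proof.
move=> hab hs e he; have [N hN] := hs e he; exists N => n hn /=.
by rewrite -(eq_bigr _ (fun (i : 'I_n) _ => hab i)); apply: hN.
Qed.

Lemma has_sumD a b s t : has_sum abs a s -> has_sum abs b t ->
  has_sum abs (fun n => a n + b n) (s + t).
Proof.
move=> hs ht e he; have [N1 h1] := hs e he; have [N2 h2] := ht e he.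
exists (N1 + N2)%N => n hn /=; rewrite big_split /= opprD addrACA.
by apply: ultra_lt; [apply: h1 | apply: h2]; apply: leq_trans hn; rewrite ?leq_addr ?leq_addl.
Qed.

Lemma has_sumZ c a s : has_sum abs a s -> has_sum abs (fun n => c * a n) (c * s).
Proof.
move=> hs e he.
have [->|hc] := eqVneq c 0.
  by exists 0%N => n _; rewrite big1 ?mul0r ?subr0 ?abs0 // => i _; rewrite mul0r.
have hca : 0 < abs c by rewrite abs_gt0.
have [N hN] := hs (e / abs c) (divr_gt0 he hca).
exists N => n hn /=; rewrite -mulr_sumr -mulrBr (absM hC).
by rewrite mulrC -ltr_pdivlMr //; apply: hN.
Qed.

Lemma has_sum_finite a M : (forall n, (M <= n)%N -> a n = 0) ->
  has_sum abs a (\sum_(k < M) a k).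
Proof.
move=> h0 e he; exists M => n hn /=.
rewrite -!(big_mkord xpredT) (big_cat_nat (leq0n M) hn) /= addrAC subrr add0r.
by rewrite big_nat_cond big1 ?abs0 // => i /andP[/andP[hi _] _]; apply: h0.
Qed.

Lemma sumK_finite a j : (forall k, (j < k)%N -> a k = 0) -> sumK abs a = \sum_(k < j.+1) a k.
Proof. by move=> h; apply: sumK_eq; apply: has_sum_finite. Qed.

Lemma has_sum_bigsum m (F : nat -> nat -> K) (S : nat -> K) :
  (forall i, (i < m)%N -> has_sum abs (F i) (S i)) ->
  has_sum abs (fun n => \sum_(i < m) F i n) (\sum_(i < m) S i).
Proof.
elim: m => [|m IH] hF.
  have := has_sum_finite (a := fun _ => 0 : K) (M := 0%N) (fun _ _ => erefl).
  by rewrite !big_ord0 => h; apply: eq_has_sum h => n; rewrite big_ord0.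
rewrite big_ord_recr /=.
apply: eq_has_sum (has_sumD (IH _) (hF m _)) => //; first by move=> n; rewrite big_ord_recr.
by move=> i hi; apply: hF; apply: ltnW.
Qed.

Lemma has_sum_tail a s : has_sum abs a s -> has_sum abs (fun n => a n.+1) (s - a 0%N).
Proof.
move=> hs e he; have [N hN] := hs e he; exists N => n hn /=.
by have := hN n.+1 (leqW hn); rewrite big_ord_recl /= opprB addrCA addrA.
Qed.

Lemma has_sum_cons a s : has_sum abs (fun n => a n.+1) s -> has_sum abs a (a 0%N + s).
Proof.
move=> hs e he; have [N hN] := hs e he; exists N.+1 => -[//|n] hn.
by rewrite big_ord_recl /= opprD addrACA subrr add0r; apply: hN.
Qed.

Lemma has_sum_shiftD a c b s t : b 0%N = a 0%N -> (forall k, b k.+1 = a k.+1 + c k) ->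
  has_sum abs a s -> has_sum abs c t -> has_sum abs b (s + t).
Proof.
move=> h0 hS hs ht.
have := has_sum_cons (eq_has_sum (fun k => esym (hS k)) (has_sumD (has_sum_tail hs) ht)).
by rewrite h0 addrA [a 0%N + _]addrC subrK.
Qed.

Lemma null_seq_summable a : null_seq a -> exists s, has_sum abs a s.
Proof.
move=> ha; apply: (complete hC) => e he.
have [N hN] := ha e he; exists N.
have key m n : (N <= n)%N -> (n <= m)%N -> abs (\sum_(k < m) a k - \sum_(k < n) a k) < e.
  move=> hn hnm; rewrite -!(big_mkord xpredT) (big_cat_nat (leq0n n) hnm) /= addrAC subrr add0r.
  rewrite big_nat_cond; apply: ultra_sum_lt => // i /andP[/andP[hi _] _].
  by apply: hN; apply: leq_trans hi.
move=> m n hm hn; have [hnm|hmn] := leqP n m; first exact: key.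
by rewrite abs_distC; apply: key => //; apply: ltnW.
Qed.

Lemma abs_has_sum_le a s B : (forall n, abs (a n) <= B) -> has_sum abs a s -> abs s <= B.
Proof.
move=> hB hs; have hB0 : 0 <= B by apply: le_trans (abs_nneg _) (hB 0%N).
rewrite leNgt; apply/negP => hsB.
have [N hN] : exists N, forall n, (N <= n)%N -> abs (\sum_(k < n) a k - s) < abs s - B.
  by apply: hs; rewrite subr_gt0.
have h1 := hN N (leqnn N).
have h2 : abs (\sum_(k < N) a k) <= B.
  exact: ultra_sum_le.
have := abs_ultra hC (s - \sum_(k < N) a k) (\sum_(k < N) a k).
rewrite subrK le_max abs_distC => /orP[] h3; lra.
Qed.


Definition ffact x k : K := \prod_(i < k) (x - i%:R).

Lemma binom0 x : binom x 0 = 1.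
Proof. by rewrite /binom big_ord0 fact0 divr1. Qed.

Lemma ffact_recl x k : ffact x k.+1 = x * ffact (x - 1) k.
Proof.
rewrite /ffact big_ord_recl /= subr0; congr (_ * _); apply: eq_bigr => i _.
by rewrite mulrSr opprD addrA addrAC.
Qed.

Lemma ffact_recr x k : ffact x k.+1 = ffact x k * (x - k%:R).
Proof. by rewrite /ffact big_ord_recr. Qed.

Lemma binomS x k : binom (x + 1) k.+1 = binom x k.+1 + binom x k.
Proof.
rewrite /binom -!/(ffact _ _) ffact_recl addrK ffact_recr factS natrM.
have h1 := fact_natr_neq0 k; have h2 : k.+1%:R != 0 :> K by rewrite natr_neq0.
by field; rewrite h1 addrC -mulrSr h2.
Qed.

Lemma binom_absorb x k : binom x k.+1 = x * binom (x - 1) k / k.+1%:R.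
Proof.
rewrite /binom -!/(ffact _ _) ffact_recl factS natrM.
have h1 := fact_natr_neq0 k; have h2 : k.+1%:R != 0 :> K by rewrite natr_neq0.
by field; rewrite h1 addrC -mulrSr h2.
Qed.

Lemma binom_natr n k : binom (n%:R : K) k = 'C(n, k)%:R.
Proof.
elim: n k => [|n IH] [|k]; rewrite ?binom0 ?bin0 //.
  by rewrite /binom -/(ffact _ _) ffact_recl !mul0r bin0n.
by rewrite mulrSr binomS !IH binS natrD.
Qed.

Lemma in_Zp_natr n : in_Zp abs (n%:R).
Proof. by move=> e he; exists n; rewrite subrr abs0. Qed.

Lemma abs_Zp_le1 x : in_Zp abs x -> abs x <= 1.
Proof.
move=> hx; have [n hn] := hx 1 ltr01.
by rewrite -(subrK n%:R x); apply: ultra_le; [apply: ltW | apply: abs_natr_le1].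
Qed.

Lemma in_Zp_add1 x : in_Zp abs x -> in_Zp abs (x + 1).
Proof.
move=> hx e he; have [n hn] := hx e he; exists n.+1.
by rewrite mulrSr opprD addrACA subrr addr0.
Qed.

(* [x - 1] is approximated by [n + p^t - 1] when [x] is approximated by [n]. *)
Lemma in_Zp_sub1 x : in_Zp abs x -> in_Zp abs (x - 1).
Proof.
move=> hx e he; have [n hn] := hx e he; have [t ht] := abs_p_expr_small he.
exists (n + (p ^ t).-1)%N.
have hpt : (0 < p ^ t)%N by rewrite expn_gt0 p_gt0.
have -> : x - 1 - (n + (p ^ t).-1)%:R = (x - n%:R) - p%:R ^+ t.
  by rewrite -natrX -{2}(prednK hpt) mulrSr natrD; ring.
by apply: ultraB_lt => //; rewrite absX.
Qed.

Lemma in_Zp_subn x n : in_Zp abs x -> in_Zp abs (x - n%:R).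
Proof.
move=> hx; elim: n => [|n IH]; first by rewrite subr0.
by rewrite mulrSr opprD addrA; apply: in_Zp_sub1.
Qed.

Lemma in_Zp_intr (n : int) : in_Zp abs (n%:~R).
Proof.
case: n => m; first exact: in_Zp_natr.
rewrite NegzE intrN -[- _]add0r; apply: in_Zp_subn; exact: (in_Zp_natr 0).
Qed.

Lemma abs_binom_le1 x k : in_Zp abs x -> abs (binom x k) <= 1.
Proof.
move=> hx; have hf := fact_natr_neq0 k; have hfa : 0 < abs (k`!)%:R by rewrite abs_gt0.
have [n hn] := hx _ hfa.
have -> : binom x k = binom n%:R k + (ffact x k - ffact n%:R k) / (k`!)%:R.
  by rewrite /binom -!/(ffact _ _) mulrBl addrC subrK.
apply: ultra_le; first by rewrite binom_natr abs_natr_le1.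
rewrite (absM hC) absV ler_pdivrMr // mul1r; apply: ltW; apply: le_lt_trans hn.
apply: (@abs_prodB_le k (fun i => x - i%:R) (fun i => n%:R - i%:R)) => [|i|i|i].
- exact: abs_nneg.
- by apply: ultraB_le; [apply: abs_Zp_le1 | apply: abs_natr_le1].
- by apply: ultraB_le; apply: abs_natr_le1.
- by rewrite opprB addrA subrK.
Qed.

(** * Mahler coefficients of a continuous function tend to 0 *)

Lemma iter_nablaE n (f : K -> K) x : iter n (@nabla K) f x =
  \sum_(i < n.+1) (-1) ^+ (n - i) * 'C(n, i)%:R * f (x + i%:R).
Proof.
elim: n x => [|n IH] x; first by rewrite big_ord1 /= expr0 !mul1r addr0.
rewrite iterS /nabla !IH [in RHS]big_ord_recl /= subn0 bin0 mulr1n mulr1 addr0.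
have E (i : 'I_n.+1) : (-1) ^+ (n.+1 - bump 0 i) * 'C(n.+1, bump 0 i)%:R * f (x + (bump 0 i)%:R)
   = (-1) ^+ (n - i) * 'C(n, i)%:R * f (x + 1 + i%:R)
     + (-1) ^+ (n - i) * 'C(n, i.+1)%:R * f (x + i.+1%:R).
  by rewrite /bump /= add1n subSS binS natrD -addrA [1 + _]addrC -mulrSr; ring.
rewrite (eq_bigr _ (fun i _ => E i)) big_split /=.
rewrite [X in _ - X]big_ord_recl [X in _ = _ + (_ + X)]big_ord_recr /= subn0 bin0.
rewrite mulr1n mulr1 addr0 bin_small // mulr0 mul0r addr0.
have E2 (i : 'I_n) : (-1) ^+ (n - i) * 'C(n, i.+1)%:R * f (x + i.+1%:R)
   = - ((-1) ^+ (n - bump 0 i) * 'C(n, bump 0 i)%:R * f (x + (bump 0 i)%:R)).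
  have hi : (n - i = (n - i.+1).+1)%N by have := ltn_ord i; lia.
  by rewrite /bump /= add1n hi exprS; ring.
by rewrite (eq_bigr _ (fun i _ => E2 i)) sumrN exprS; ring.
Qed.

Lemma prime_dvd_bin_pow s i : (0 < i < p ^ s)%N -> (p %| 'C(p ^ s, i))%N.
Proof.
case: i => [//|j] /andP[_ hj]; apply/negPn/negP => hnd.
have hco : coprime (p ^ s) 'C(p ^ s, j.+1) by rewrite coprimeXl // prime_coprime.
have : (p ^ s %| j.+1 * 'C(p ^ s, j.+1))%N by rewrite -mul_bin_diag dvdn_mulr.
by rewrite Gauss_dvdl // => /dvdn_leq /= /(_ isT); rewrite leqNgt hj.
Qed.

(* For [N = p^s] all these coefficients are divisible by p, i.e.
   [nabla^N g x = g (x + N) - g x] modulo p. *)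
Definition nabla_pow_defect (N i : nat) : K :=
  (-1) ^+ (N - i) * 'C(N, i)%:R - (i == N)%:R + (i == 0%N)%:R.

Lemma nabla_pow_defectE g x N : iter N (@nabla K) g x - (g (x + N%:R) - g x)
  = \sum_(i < N.+1) nabla_pow_defect N i * g (x + i%:R).
Proof.
rewrite iter_nablaE.
under [RHS]eq_bigr => i _ do rewrite /nabla_pow_defect !mulrDl mulNr.
rewrite !big_split /= sumrN.
have -> : \sum_(i < N.+1) (i == N :> nat)%:R * g (x + i%:R) = g (x + N%:R).
  rewrite big_ord_recr /= eqxx mul1r big1 ?add0r // => i _.
  by rewrite (ltn_eqF (ltn_ord i)) mul0r.
have -> : \sum_(i < N.+1) (i == 0%N :> nat)%:R * g (x + i%:R) = g x.
  by rewrite big_ord_recl /= mul1r addr0 big1 ?addr0 // => i _; rewrite mul0r.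
by ring.
Qed.

(* At [i = 0] the coefficient is [(-1)^(p^s) + 1], which vanishes for odd p
   and equals [2 = p] for p = 2. *)
Lemma abs_nabla_pow_defect s i : (i <= p ^ s)%N ->
  abs (nabla_pow_defect (p ^ s) i) <= abs (p%:R).
Proof.
move=> hi; rewrite /nabla_pow_defect; set N := (p ^ s)%N.
have hN : (0 < N)%N by rewrite expn_gt0 p_gt0.
have [->|hiN] := eqVneq i N.
  by rewrite subnn expr0 binn mul1r eqn0Ngt hN /= subrr add0r abs0 abs_nneg.
have [->|hi0] := eqVneq i 0%N.
  rewrite subn0 bin0 mulr1n mulr1 /= subr0 -signr_odd.
  case: (boolP (odd N)) => hodd; first by rewrite expr1 addNr abs0 abs_nneg.
  have h2 : (2 %| p)%N.
    have : (2 %| p ^ s)%N by rewrite dvdn2.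
    by rewrite Euclid_dvdX // => /andP[].
  have -> : p = 2%N by apply/eqP; rewrite eq_sym -(dvdn_prime2 (isT : prime 2) hp).
  by rewrite expr0.
have hlt : (0 < i < N)%N by rewrite lt0n hi0 ltn_neqAle hiN hi.
have [m ->] := dvdnP (prime_dvd_bin_pow hlt).
by rewrite /= subr0 addr0 natrM (absM hC) abs_sign mul1r abs_natr_mul_le.
Qed.

Lemma abs_iter_nabla_pow_le g (e B : R) s : 0 <= e -> 0 <= B ->
  (forall j, abs (g j%:R) <= B) ->
  (forall j, abs (g (j + p ^ s)%:R - g j%:R) <= e) ->
  forall j, abs (iter (p ^ s) (@nabla K) g j%:R) <= Num.max e (abs (p%:R) * B).
Proof.
move=> he hB hg hsh j.
move/eqP: (nabla_pow_defectE g j%:R (p ^ s)); rewrite subr_eq => /eqP ->.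
apply: ultra_le; last by rewrite le_max -natrD hsh.
apply: ultra_sum_le => [|i _]; first by rewrite le_max he.
rewrite (absM hC) le_max; apply/orP; right.
apply: le_trans (ler_wpM2r (abs_nneg _) (abs_nabla_pow_defect _)) _; first by rewrite -ltnS.
by apply: ler_wpM2l; [apply: abs_nneg | rewrite -natrD; apply: hg].
Qed.

Lemma abs_iter_nabla_le g (B : R) k : 0 <= B -> (forall j, abs (g j%:R) <= B) ->
  forall j, abs (iter k (@nabla K) g j%:R) <= B.
Proof.
move=> hB hg; elim: k => [|k IH] j //=.
by rewrite /nabla -mulrSr; apply: ultraB_le.
Qed.

Lemma abs_iter_nabla_shift_le g (e : R) L k : 0 <= e ->
  (forall j, abs (g (j + L)%:R - g j%:R) <= e) ->
  forall j, abs (iter k (@nabla K) g (j + L)%:R - iter k (@nabla K) g j%:R) <= e.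
Proof.
move=> he hg; elim: k => [|k IH] j //=.
rewrite /nabla -!mulrSr -addSn; set h := iter k _ g.
have -> : h (j.+1 + L)%:R - h (j + L)%:R - (h j.+1%:R - h j%:R)
   = (h (j.+1 + L)%:R - h j.+1%:R) - (h (j + L)%:R - h j%:R) by ring.
exact: ultraB_le.
Qed.

(* On the residue class [a + p^t N], arbitrarily small shifts [p^s] move
   [phi] by at least [e]. *)
Definition nonuniform_class (phi : K -> K) (e : R) (t a : nat) : Prop :=
  forall S, exists s q, (S <= s)%N /\
    e <= abs (phi (a + q * p ^ t + p ^ s)%:R - phi (a + q * p ^ t)%:R).

Lemma exists_common_bound (Q : nat -> nat -> Prop) n :
  (forall i S S', (S <= S')%N -> Q i S -> Q i S') ->
  (forall i, (i < n)%N -> exists S, Q i S) -> exists S, forall i, (i < n)%N -> Q i S.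
Proof.
move=> hmono; elim: n => [|n IH] h; first by exists 0%N.
have [S1 h1] := IH (fun i hi => h i (leqW hi)).
have [S2 h2] := h n (ltnSn n).
exists (maxn S1 S2) => i; rewrite ltnS leq_eqVlt => /orP[/eqP ->|hi].
  by apply: hmono h2; apply: leq_maxr.
by apply: hmono (h1 i hi); apply: leq_maxl.
Qed.

Lemma nonuniform_class_refine phi e t a : nonuniform_class phi e t a ->
  exists i, (i < p)%N /\ nonuniform_class phi e t.+1 (a + i * p ^ t).
Proof.
move=> hb; apply: NNPP => hne.
pose Q i S := forall s q, (S <= s)%N ->
  abs (phi (a + i * p ^ t + q * p ^ t.+1 + p ^ s)%:R
       - phi (a + i * p ^ t + q * p ^ t.+1)%:R) < e.
have hall i : (i < p)%N -> exists S, Q i S.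
  move=> hi; apply: NNPP => hS; apply: hne; exists i; split => // S.
  apply: NNPP => hS2; apply: hS; exists S => s q hs; rewrite ltNge; apply/negP => hle.
  by apply: hS2; exists s, q.
have [S hS] : exists S, forall i, (i < p)%N -> Q i S.
  by apply: exists_common_bound hall => i S S' hSS' hQ s q hs; apply: hQ; apply: leq_trans hs.
have [s [q [hs hle]]] := hb S.
have := hS _ (ltn_pmod q p_gt0) s (q %/ p)%N hs.
have -> : (a + q %% p * p ^ t + q %/ p * p ^ t.+1 = a + q * p ^ t)%N.
  rewrite {3}(divn_eq q p) expnS; move: (q %% p)%N (q %/ p)%N (p ^ t)%N => r d X; nia.
by rewrite ltNge hle.
Qed.

(* The natural number with base-p digits [G 0 _, G 1 _, ...], each digit
   chosen knowing the previous ones. *)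
Fixpoint digit_path (G : nat -> nat -> nat) (t : nat) : nat :=
  if t is t'.+1 then (digit_path G t' + G t' (digit_path G t') * p ^ t')%N else 0%N.

Lemma digit_path_prefix G m n : (n <= m)%N ->
  exists c, digit_path G m = (digit_path G n + c * p ^ n)%N.
Proof.
move=> /subnK <-; elim: (m - n)%N => [|d [c hc]].
  by exists 0%N; rewrite add0n mul0n addn0.
exists (c + G (d + n)%N (digit_path G (d + n)) * p ^ d)%N.
by rewrite addSn /= hc expnD mulnDl mulnA addnA.
Qed.

Lemma digit_path_cauchy G : cauchy_seq abs (fun t => (digit_path G t)%:R).
Proof.
move=> d hd; have [t ht] := abs_p_expr_small hd; exists t => m n hm hn.
wlog hnm : m n hm hn / (n <= m)%N.
  move=> hw; have [h|h] := leqP n m; first exact: hw.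
  by rewrite abs_distC; apply: hw => //; apply: ltnW.
have [c ->] := digit_path_prefix G hnm.
rewrite natrD addrAC subrr add0r.
by apply: le_lt_trans (abs_natr_mulpX_le c n) _; apply: le_lt_trans ht; apply: abs_p_expr_mono.
Qed.

Lemma near_natr a c t z (d : R) : abs (a%:R - z) < d -> abs (p%:R) ^+ t < d ->
  abs ((a + c * p ^ t)%:R - z) < d.
Proof.
move=> h1 h2; rewrite natrD addrAC; apply: ultra_lt => //.
exact: le_lt_trans (abs_natr_mulpX_le c t) _.
Qed.

(* Compactness of Z_p: refining a residue class on which uniform continuity
   fails, digit by digit, converges to a point where [phi] is discontinuous. *)
Lemma uniform_shift phi : cont_Zp abs phi -> forall e : R, 0 < e ->
  exists s, forall j, abs (phi (j + p ^ s)%:R - phi j%:R) < e.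
Proof.
move=> hphi e he; apply: NNPP => hne.
have hb0 : nonuniform_class phi e 0 0.
  move=> S; apply: NNPP => hS; apply: hne; exists S => j; rewrite ltNge; apply/negP => hle.
  by apply: hS; exists S, j; rewrite expn0 muln1 add0n.
pose G t a := epsilon (inhabits 0%N)
  (fun i => (i < p)%N /\ nonuniform_class phi e t.+1 (a + i * p ^ t)).
have hbad t : nonuniform_class phi e t (digit_path G t).
  elim: t => [|t IH] //=.
  by case: (epsilon_spec (inhabits 0%N) _ (nonuniform_class_refine IH)).
have [z hz] := complete hC (digit_path_cauchy G).
have hzZ : in_Zp abs z.
  move=> d hd; have [N hN] := hz d hd.
  by exists (digit_path G N); rewrite abs_distC; apply: hN.
have [d hd hcont] := hphi z hzZ e he.
have [t1 ht1] := abs_p_expr_small hd; have [N hN] := hz d hd.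
pose t := (t1 + N)%N.
have htd : abs (p%:R) ^+ t < d.
  by apply: le_lt_trans ht1; apply: abs_p_expr_mono; apply: leq_addr.
have hat : abs ((digit_path G t)%:R - z) < d by apply: hN; apply: leq_addl.
have [s [q [hs hle]]] := hbad t t.
have h1 : abs ((digit_path G t + q * p ^ t)%:R - z) < d by apply: near_natr.
have h2 : abs ((digit_path G t + q * p ^ t + p ^ s)%:R - z) < d.
  by rewrite -addnA -(subnK hs) expnD -mulnDl; apply: near_natr.
have := ultraB_lt (hcont _ (in_Zp_natr _) h2) (hcont _ (in_Zp_natr _) h1).
by rewrite opprB addrA subrK ltNge hle.
Qed.

Lemma bounded_natr phi : cont_Zp abs phi ->
  exists2 M, 1 <= M & forall j, abs (phi j%:R) <= M.
Proof.
move=> hphi; have [s hs] := uniform_shift hphi ltr01; pose L := (p ^ s)%N.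
have hS : 0 <= \sum_(i < L) abs (phi i%:R) by rewrite sumr_ge0 // => i _; apply: abs_nneg.
exists (1 + \sum_(i < L) abs (phi i%:R)); first by rewrite lerDl.
elim/ltn_ind => j IH; have [hj|hj] := ltnP j L.
  apply: le_trans (_ : _ <= \sum_(i < L) abs (phi i%:R)) _; last by rewrite lerDr.
  by rewrite (bigD1 (Ordinal hj)) //= lerDl sumr_ge0 // => i _; apply: abs_nneg.
have hL : (0 < L)%N by rewrite expn_gt0 p_gt0.
have := hs (j - L)%N; rewrite subnK // => h.
rewrite -(subrK (phi (j - L)%N%:R) (phi j%:R)); apply: ultra_le.
  by apply: le_trans (ltW h) _; rewrite lerDl.
by apply: IH; rewrite ltn_subrL hL (leq_trans hL hj).
Qed.

Lemma bounded_Zp phi : cont_Zp abs phi ->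
  exists2 M, 1 <= M & forall x, in_Zp abs x -> abs (phi x) <= M.
Proof.
move=> hphi; have [M hM1 hM] := bounded_natr hphi; exists M => // x hx.
have [d hd hc] := hphi x hx 1 ltr01; have [n hn] := hx d hd.
have h : abs (phi n%:R - phi x) < 1 by apply: hc; [apply: in_Zp_natr | rewrite abs_distC].
have -> : phi x = phi n%:R - (phi n%:R - phi x) by rewrite opprB addrC subrK.
apply: ultraB_le; first exact: hM.
exact: le_trans (ltW h) hM1.
Qed.

Lemma abs_iter_nabla_mulpX_le g (e M : R) s : 0 <= e -> 0 <= M ->
  (forall j, abs (g j%:R) <= M) ->
  (forall j, abs (g (j + p ^ s)%:R - g j%:R) <= e) ->
  forall m j, abs (iter (m * p ^ s) (@nabla K) g j%:R) <= Num.max e (abs (p%:R) ^+ m * M).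
Proof.
move=> he hM hg hsh; set q := abs (p%:R).
have hq0 : 0 <= q := abs_nneg _.
elim=> [|m IH] j; first by rewrite mul0n /= expr0 mul1r le_max hg orbT.
rewrite mulSn iterD.
apply: le_trans (abs_iter_nabla_pow_le _ _ IH _ _) _.
- exact: he.
- by rewrite le_max he.
- by move=> i; apply: abs_iter_nabla_shift_le.
rewrite ge_max le_max lexx /= maxr_pMr // ge_max !le_max exprS mulrA lexx orbT andbT.
by rewrite -[X in _ <= X]mul1r ler_wpM2r ?lexx // ltW // abs_p_lt1.
Qed.

Lemma mahler_coef_null phi : cont_Zp abs phi -> null_seq (fun k => iter k (@nabla K) phi 0).
Proof.
move=> hphi e he.
have [M hM1 hM] := bounded_natr hphi; have hM0 : 0 < M := lt_le_trans ltr01 hM1.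
have he2 : 0 < e / 2 by rewrite divr_gt0.
have [s hs] := uniform_shift hphi he2.
have [m hm] := abs_p_expr_small (divr_gt0 he2 hM0).
have hb j : abs (iter (m * p ^ s) (@nabla K) phi j%:R) <= e / 2.
  apply: le_trans (abs_iter_nabla_mulpX_le (ltW he2) (ltW hM0) hM (fun j => ltW (hs j)) m j) _.
  by rewrite ge_max lexx /= -ler_pdivlMr // ltW.
exists (m * p ^ s)%N => n hn; rewrite -(subnK hn) iterD.
have := abs_iter_nabla_le (n - m * p ^ s) (ltW he2) hb 0%N; rewrite mulr0n => h.
by apply: le_lt_trans h _; rewrite ltr_pdivrMr // ltr_pMr // ltr1n.
Qed.

(** * The operators S^y *)

Definition Sop_term y (phi : K -> K) x k : K :=
  (-1) ^+ k * (k`!)%:R * binom y k * binom x k * phi (x - k%:R).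

Lemma null_Sop_term y phi x M : in_Zp abs y -> in_Zp abs x ->
  (forall z, in_Zp abs z -> abs (phi z) <= M) -> null_seq (Sop_term y phi x).
Proof.
move=> hy hx hM.
have hv k : abs ((-1) ^+ k * binom y k * binom x k * phi (x - k%:R)) <= M.
  rewrite (absM hC _ (phi _)) -[M]mul1r.
  apply: ler_pM; [exact: abs_nneg | exact: abs_nneg | | exact/hM/in_Zp_subn].
  rewrite (absM hC _ (binom x k)) (absM hC _ (binom y k)) abs_sign mul1r -[1]mulr1.
  by apply: ler_pM; rewrite ?abs_nneg ?abs_binom_le1.
apply: null_seq_le (null_seq_mulr_bounded null_seq_fact hv) _ => k.
by rewrite /Sop_term -!mulrA mulrCA.
Qed.

Lemma Sop_sigma y phi x : in_Zp abs y -> cont_Zp abs phi -> in_Zp abs x ->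
  Sop abs y (sigma phi) x = Sop abs y phi (x + 1) + y * Sop abs (y - 1) phi x.
Proof.
move=> hy hphi hx; have [M _ hM] := bounded_Zp hphi.
have hsM z : in_Zp abs z -> abs (sigma phi z) <= M by move=> hz; apply/hM/in_Zp_add1.
have [s hs] := null_seq_summable (null_Sop_term hy hx hsM).
have [t ht] := null_seq_summable (null_Sop_term (in_Zp_sub1 hy) hx hM).
have h : has_sum abs (Sop_term y phi (x + 1)) (s + - y * t).
  apply: (has_sum_shiftD _ _ hs (has_sumZ (- y) ht)) => [|k].
    by rewrite /Sop_term /sigma !binom0 mulr0n !subr0.
  rewrite /Sop_term /sigma binomS binom_absorb factS natrM exprS mulrSr.
  have -> : x + 1 - (k%:R + 1) = x - k%:R by ring.
  have -> : x - (k%:R + 1) + 1 = x - k%:R by ring.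
  have hk : k%:R + 1 != 0 :> K by rewrite -mulrSr natr_neq0.
  by field.
rewrite /Sop (sumK_eq hs) (sumK_eq ht) (sumK_eq h); ring.
Qed.

(** * Mahler coefficients and convolution *)

Lemma iter_nabla_natr (f : K -> K) (c : nat -> K) :
  (forall j, f j%:R = \sum_(k < j.+1) c k * 'C(j, k)%:R) ->
  forall k j, iter k (@nabla K) f j%:R = \sum_(i < j.+1) c (i + k)%N * 'C(j, i)%:R.
Proof.
move=> hf; elim=> [|k IH] j.
  by rewrite /= hf; apply: eq_bigr => i _; rewrite addn0.
rewrite iterS /nabla -mulrSr !IH big_ord_recl /= bin0 add0n.
have E (i : 'I_j.+1) : c (bump 0 i + k)%N * 'C(j.+1, bump 0 i)%:R
   = c (i + k.+1)%N * 'C(j, i.+1)%:R + c (i + k.+1)%N * 'C(j, i)%:R.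
  by rewrite /bump /= add1n binS natrD addSn addnS mulrDr.
rewrite (eq_bigr _ (fun i _ => E i)) big_split /= [X in _ - X]big_ord_recl /= bin0 add0n.
rewrite [X in _ + (X + _) - _]big_ord_recr /= bin_small // mulr0 addr0.
have E2 (i : 'I_j) : c (i + k.+1)%N * 'C(j, i.+1)%:R = c (bump 0 i + k)%N * 'C(j, bump 0 i)%:R.
  by rewrite /bump /= add1n addSn addnS.
by rewrite (eq_bigr _ (fun i _ => E2 i)); ring.
Qed.

Lemma mahler_coef_natr (f : K -> K) (c : nat -> K) :
  (forall j, f j%:R = \sum_(k < j.+1) c k * 'C(j, k)%:R) ->
  forall k, iter k (@nabla K) f 0 = c k.
Proof.
move=> hf k; have := iter_nabla_natr hf k 0.
by rewrite mulr0n big_ord1 /= add0n bin0 mulr1.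
Qed.

Definition conv_coef (a b : nat -> K) n : K :=
  \sum_(k < n.+1) 'C(n, k)%:R * a k * b (n - k)%N.

Lemma conv_coefS a b n : conv_coef a b n.+1 =
  \sum_(k < n.+1) 'C(n, k)%:R * a k * b (n - k).+1
  + \sum_(k < n.+1) 'C(n, k)%:R * a k.+1 * b (n - k)%N.
Proof.
rewrite /conv_coef big_ord_recl /= bin0 subn0.
have E (i : 'I_n.+1) : 'C(n.+1, bump 0 i)%:R * a (bump 0 i) * b (n.+1 - bump 0 i)%N
   = 'C(n, i.+1)%:R * a i.+1 * b (n - i)%N + 'C(n, i)%:R * a i.+1 * b (n - i)%N.
  by rewrite /bump /= add1n subSS binS natrD !mulrDl.
rewrite (eq_bigr _ (fun i _ => E i)) big_split /= addrA; congr (_ + _).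
rewrite [in RHS]big_ord_recl /= bin0 subn0 [X in _ + X = _]big_ord_recr /= bin_small //.
rewrite mul0r mul0r addr0; congr (_ + _); apply: eq_bigr => i _.
by rewrite /bump /= add1n; congr (_ * b _); have := ltn_ord i; lia.
Qed.

Lemma conv_coef_shift a b c lam n : (forall k, a k.+1 = lam * c k) ->
  conv_coef a (fun m => b m + b m.+1) n
  = conv_coef a b n + conv_coef a b n.+1 - lam * conv_coef c b n.
Proof.
move=> hac; rewrite conv_coefS /conv_coef.
under eq_bigr => k _ do rewrite mulrDr.
rewrite big_split /=.
have -> : \sum_(k < n.+1) 'C(n, k)%:R * a k.+1 * b (n - k)%N
    = lam * \sum_(k < n.+1) 'C(n, k)%:R * c k * b (n - k)%N.
  by rewrite mulr_sumr; apply: eq_bigr => k _; rewrite hac; ring.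
by ring.
Qed.

Lemma null_conv_coef a b : null_seq a -> null_seq b -> null_seq (conv_coef a b).
Proof.
move=> ha hb e he.
have [Ma hMa ha'] := null_seq_bounded ha; have [Mb hMb hb'] := null_seq_bounded hb.
have [Na hNa] := ha (e / Mb) (divr_gt0 he hMb).
have [Nb hNb] := hb (e / Ma) (divr_gt0 he hMa).
exists (Na + Nb)%N => n hn; apply: ultra_sum_lt => // k _.
rewrite -mulrA; apply: le_lt_trans (abs_natr_mul_le _ _) _; rewrite (absM hC).
have [hk|hk] := leqP Na k.
  have h1 := hNa k hk; rewrite ltr_pdivlMr // in h1.
  by apply: le_lt_trans _ h1; apply: ler_wpM2l; [apply: abs_nneg | apply: hb'].
have hk' : (Nb <= n - k)%N by lia.
have h1 := hNb _ hk'; rewrite ltr_pdivlMr // in h1; apply: le_lt_trans _ h1.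
by rewrite mulrC; apply: ler_wpM2l; [apply: abs_nneg | apply: ha'].
Qed.

Lemma convE psi phi x : conv abs psi phi x = sumK abs (fun n =>
  conv_coef (fun k => iter k (@nabla K) psi 0) (fun k => iter k (@nabla K) phi 0) n * binom x n).
Proof. by []. Qed.

Lemma iter_nabla_sigma (phi : K -> K) n z :
  iter n (@nabla K) (sigma phi) z = iter n (@nabla K) phi (z + 1).
Proof. by elim: n z => [|n IH] z //=; rewrite /nabla !IH. Qed.

Lemma conv_sigma psi chi phi lam x : in_Zp abs x ->
  null_seq (fun k => iter k (@nabla K) psi 0) -> null_seq (fun k => iter k (@nabla K) chi 0) ->
  null_seq (fun k => iter k (@nabla K) phi 0) ->
  (forall k, iter k.+1 (@nabla K) psi 0 = lam * iter k (@nabla K) chi 0) ->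
  conv abs psi (sigma phi) x = conv abs psi phi (x + 1) - lam * conv abs chi phi x.
Proof.
move=> hx ha hc hb hac.
set a := fun k => iter k (@nabla K) psi 0; set c := fun k => iter k (@nabla K) chi 0.
set b := fun k => iter k (@nabla K) phi 0.
have hbx n : abs (binom x n) <= 1 by apply: abs_binom_le1.
have summable d : null_seq d -> exists s, has_sum abs (fun n => d n * binom x n) s.
  by move=> hd; apply: null_seq_summable; apply: null_seq_mulr_bounded hd hbx.
have [s hs] := summable _ (null_conv_coef ha hb).
have [t ht] : exists t, has_sum abs (fun n => conv_coef a b n.+1 * binom x n) t.
  by apply: (summable (fun n => conv_coef a b n.+1)) => e /(null_conv_coef ha hb) [N hN];
     exists N => n hn; apply/hN/leqW.
have [u hu] := summable _ (null_conv_coef hc hb).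
have hsig : has_sum abs
    (fun n => conv_coef a (fun m => iter m (@nabla K) (sigma phi) 0) n * binom x n)
    (s + t + - lam * u).
  apply: eq_has_sum (has_sumD (has_sumD hs ht) (has_sumZ (- lam) hu)) => n.
  have -> : (fun m => iter m (@nabla K) (sigma phi) 0) = (fun m => b m + b m.+1).
    by apply: boolp.funext => m; rewrite iter_nabla_sigma /b iterS /nabla !add0r addrC subrK.
  by rewrite (conv_coef_shift _ _ hac); ring.
have hshift : has_sum abs (fun n => conv_coef a b n * binom (x + 1) n) (s + t).
  by apply: (has_sum_shiftD _ _ hs ht) => [|k]; rewrite ?binom0 // binomS mulrDr.
rewrite !convE (sumK_eq hsig) (sumK_eq hshift) (sumK_eq hu); ring.
Qed.

(** * The functions (1 - x)^{*y} and the algebra A *)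

Definition omx_coef y k : K := (-1) ^+ k * (k`!)%:R * binom y k.

Lemma omx_pow_natr y j : omx_pow abs y j%:R = \sum_(k < j.+1) omx_coef y k * 'C(j, k)%:R.
Proof.
rewrite /omx_pow /Sop (sumK_finite (j := j)) => [|k hk].
  by apply: eq_bigr => k _; rewrite /omx_coef /one_fun binom_natr mulr1.
by rewrite binom_natr bin_small // mulr0 mul0r.
Qed.

Lemma iter_nabla_omx_pow y k : iter k (@nabla K) (omx_pow abs y) 0 = omx_coef y k.
Proof. exact/mahler_coef_natr/omx_pow_natr. Qed.

Lemma omx_coefS y k : omx_coef y k.+1 = - y * omx_coef (y - 1) k.
Proof.
rewrite /omx_coef binom_absorb factS natrM exprS.
have hk : k%:R + 1 != 0 :> K by rewrite -mulrSr natr_neq0.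
by rewrite mulrSr; field.
Qed.

Lemma null_omx_pow y : in_Zp abs y -> null_seq (fun k => iter k (@nabla K) (omx_pow abs y) 0).
Proof.
move=> hy; have hv k : abs ((-1) ^+ k * binom y k) <= 1.
  by rewrite (absM hC) abs_sign mul1r abs_binom_le1.
apply: null_seq_le (null_seq_mulr_bounded null_seq_fact hv) _ => k.
by rewrite iter_nabla_omx_pow /omx_coef [_ * k`!%:R]mulrC -mulrA.
Qed.

Lemma conv_omx_pow_sigma phi x y : cont_Zp abs phi -> in_Zp abs x -> in_Zp abs y ->
  conv abs (omx_pow abs y) (sigma phi) x
  = conv abs (omx_pow abs y) phi (x + 1) + y * conv abs (omx_pow abs (y - 1)) phi x.
Proof.
move=> hphi hx hy.
rewrite (@conv_sigma _ (omx_pow abs (y - 1)) _ (- y)) ?mulNr ?opprK //.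
- exact: null_omx_pow.
- exact/null_omx_pow/in_Zp_sub1.
- exact: mahler_coef_null.
- by move=> k; rewrite !iter_nabla_omx_pow omx_coefS.
Qed.

Definition xm1_coef (n : int) k : K := (-1) ^ n * omx_coef n%:~R k.

Lemma abs_xm1_coef_le n k : abs (xm1_coef n k) <= abs ((k`!)%:R).
Proof.
rewrite /xm1_coef /omx_coef.
move: (abs_binom_le1 k (in_Zp_intr n)); move: (binom _ k) => b hb.
rewrite !(absM hC) abs_signz abs_sign !mul1r.
by rewrite -[X in _ <= X]mulr1 ler_wpM2l ?abs_nneg.
Qed.

Lemma xm1_coefS n k : xm1_coef n k.+1 = n%:~R * xm1_coef (n - 1) k.
Proof.
have hm1 : (-1 : K) != 0 by rewrite oppr_eq0 oner_eq0.
rewrite /xm1_coef omx_coefS intrD intrN expfzDr // exprN1 invrN1; ring.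
Qed.

Lemma xm1_pow_natr n j : xm1_pow abs n j%:R = \sum_(k < j.+1) xm1_coef n k * 'C(j, k)%:R.
Proof.
rewrite /xm1_pow -/(omx_pow abs _ _) omx_pow_natr mulr_sumr.
by apply: eq_bigr => k _; rewrite /xm1_coef mulrA.
Qed.

Lemma null_seq_decays (a : int -> K) N : decays_at_minfty abs a -> null_seq (fun m => a (N - m%:Z)).
Proof.
move=> ha e he; have [M hM] := ha e he; exists `|N - M|%N => n hn.
by apply: hM; lia.
Qed.

Definition Afun_coef (a : int -> K) N k : K :=
  sumK abs (fun m => a (N - m%:Z) * xm1_coef (N - m%:Z) k).

Lemma has_sum_Afun_coef a N k : decays_at_minfty abs a ->
  has_sum abs (fun m => a (N - m%:Z) * xm1_coef (N - m%:Z) k) (Afun_coef a N k).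
Proof.
move=> ha; have hb (m : nat) : abs (xm1_coef (N - m%:Z) k) <= 1.
  exact: le_trans (abs_xm1_coef_le _ _) (abs_natr_le1 _).
have [s hs] := null_seq_summable (null_seq_mulr_bounded (null_seq_decays N ha) hb).
by rewrite /Afun_coef (sumK_eq hs).
Qed.

Lemma Afun_natr a N j : decays_at_minfty abs a ->
  Afun abs a N j%:R = \sum_(k < j.+1) Afun_coef a N k * 'C(j, k)%:R.
Proof.
move=> ha; rewrite /Afun; apply: sumK_eq.
have h := has_sum_bigsum (m := j.+1)
  (F := fun k m => 'C(j, k)%:R * (a (N - m%:Z) * xm1_coef (N - m%:Z) k))
  (S := fun k => 'C(j, k)%:R * Afun_coef a N k)
  (fun k _ => has_sumZ _ (has_sum_Afun_coef N k ha)).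
rewrite (eq_bigr (fun k : 'I_j.+1 => 'C(j, k)%:R * Afun_coef a N k)) => [|k _]; last first.
  exact: mulrC.
by apply: (eq_has_sum _ h) => m; rewrite xm1_pow_natr mulr_sumr; apply: eq_bigr => k _; ring.
Qed.

Lemma iter_nabla_Afun a N k : decays_at_minfty abs a ->
  iter k (@nabla K) (Afun abs a N) 0 = Afun_coef a N k.
Proof. by move=> ha; apply: mahler_coef_natr => j; apply: Afun_natr. Qed.

Lemma null_Afun a N : decays_at_minfty abs a ->
  null_seq (fun k => iter k (@nabla K) (Afun abs a N) 0).
Proof.
move=> ha; have [Ma hMa hMa'] := null_seq_bounded (null_seq_decays N ha).
move=> e he; have [n0 hn0] := null_seq_fact (divr_gt0 he hMa); exists n0 => k hk.
rewrite iter_nabla_Afun //.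
have hb (m : nat) : abs (a (N - m%:Z) * xm1_coef (N - m%:Z) k) <= Ma * abs ((k`!)%:R).
  by rewrite (absM hC); apply: ler_pM; rewrite ?abs_nneg ?hMa' ?abs_xm1_coef_le.
apply: le_lt_trans (abs_has_sum_le hb (has_sum_Afun_coef N k ha)) _.
by rewrite mulrC -ltr_pdivlMr //; apply: hn0.
Qed.

Lemma decays_Dcoef a : decays_at_minfty abs a -> decays_at_minfty abs (Dcoef a).
Proof.
move=> ha e he; have [M hM] := ha e he; exists (M - 1) => n hn.
rewrite /Dcoef (absM hC); apply: le_lt_trans (ler_wpM2r (abs_nneg _) (abs_intr_le1 _)) _.
by rewrite mul1r; apply: hM; lia.
Qed.

Lemma Afun_coefS a N k : Afun_coef a N k.+1 = Afun_coef (Dcoef a) (N - 1) k.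
Proof.
rewrite /Afun_coef; congr (sumK abs _); apply: boolp.funext => m.
rewrite xm1_coefS /Dcoef.
have -> : N - 1 - m%:Z + 1 = N - m%:Z by ring.
have -> : N - m%:Z - 1 = N - 1 - m%:Z by ring.
by ring.
Qed.

Lemma conv_Afun_sigma a N phi x : decays_at_minfty abs a -> cont_Zp abs phi -> in_Zp abs x ->
  conv abs (Afun abs a N) (sigma phi) x
  = conv abs (Afun abs a N) phi (x + 1) - conv abs (Afun abs (Dcoef a) (N - 1)) phi x.
Proof.
move=> ha hphi hx; have hD := decays_Dcoef ha.
rewrite (@conv_sigma _ (Afun abs (Dcoef a) (N - 1)) _ 1) ?mul1r //.
- exact: null_Afun.
- exact: null_Afun.
- exact: mahler_coef_null.
- by move=> k; rewrite !iter_nabla_Afun // mul1r Afun_coefS.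
Qed.
End Cp_analysis.

Theorem proposition6p10 (p : nat) (R : realType) (K : fieldType) (abs : K -> R) :
  prime p -> is_Cp abs p ->
  [/\ (* (i) *)
      (forall (y : K) (phi : K -> K), in_Zp abs y -> cont_Zp abs phi ->
         forall x, in_Zp abs x ->
           Sop abs y (sigma phi) x = Sop abs y phi (x + 1) + y * Sop abs (y - 1) phi x),
      (* (ii) *)
      (forall (phi : K -> K) (x y : K), cont_Zp abs phi -> in_Zp abs x -> in_Zp abs y ->
           Top abs x (sigma phi) y = Top abs (x + 1) phi y + y * Top abs x phi (y - 1)),
      (* (ii), convolution form *)
      (forall (phi : K -> K) (x y : K), cont_Zp abs phi -> in_Zp abs x -> in_Zp abs y ->
           conv abs (omx_pow abs y) (sigma phi) x
           = conv abs (omx_pow abs y) phi (x + 1) + y * conv abs (omx_pow abs (y - 1)) phi x)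
    & (* (iii) *)
      (forall (a : int -> K) (N : int) (phi : K -> K) (x : K),
           decays_at_minfty abs a -> cont_Zp abs phi -> in_Zp abs x ->
           conv abs (Afun abs a N) (sigma phi) x
           = conv abs (Afun abs a N) phi (x + 1) - conv abs (Afun abs (Dcoef a) (N - 1)) phi x)].
Proof.
move=> hp hC; split.
- by move=> y phi hy hphi x hx; apply: (Sop_sigma hp hC).
- by move=> phi x y hphi hx hy; apply: (Sop_sigma hp hC).
- by move=> phi x y hphi hx hy; apply: (conv_omx_pow_sigma hp hC).
- by move=> a N phi x ha hphi hx; apply: (conv_Afun_sigma hp hC).
Qed.
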